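(* Let $\alpha\in\ell^2$. The following are equivalent: (i) $R_\alpha$ is bounded on $\ell^2$; (ii) $L([0,\infty))<\infty$; (iii) there exists $\epsilon>0$ such that the associated $(\epsilon,L)$-sequence has length $0$.
   Context: $\mathbb{N}=\{0,1,2,\dots\}$; $(R_\alpha f)(k)=\alpha_k\sum_{j=0}^kf(j)$. For a finite natural interval $I$: $\mu(I)=\sum_{k\in I}|\alpha_k|^2$, $\|f\|_{2,I}=(\sum_{k\in I}|f(k)|^2)^{1/2}$, $l(I,f)=\sum_{k\in I}\sum_{n\in I\setminus\{k\}}|\alpha_k\alpha_n\sum_{j=\min(k,n)+1}^{\max(k,n)}f(j)|^2$, $L(I)=(\sup_{\|f\|_{2,I}\le1}l(I,f)/\mu(I))^{1/2}$ (sup over $f$ supported in $I$; $L(I)=0$ if $\alpha$ vanishes on $I$). For infinite intervals, $L([a,\infty))=\lim_{b\to\infty}L([a,b])=\sup_{b\ge a}L([a,b])$. $(\epsilon,L)$-sequence: $c_0=0$, $c_{k+1}=\inf\{t\in\mathbb{N}:t>c_k,\ L([c_k,t-1])>\epsilon\}$ ($\inf\emptyset=+\infty$); it has length $N$ if $c_N<\infty$ and $c_{N+1}=+\infty$. *)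

From Stdlib Require Import Reals Lra Lia.
From Coquelicot Require Export Coquelicot.
Open Scope R_scope.

Definition Ralpha (alpha f : nat -> C) (k : nat) : C :=
  Cmult (alpha k) (sum_n_m f 0 k).

Definition in_l2 (f : nat -> C) : Prop :=
  ex_series (fun k => (Cmod (f k)) ^ 2).
Definition l2norm2 (f : nat -> C) : R :=
  Series (fun k => (Cmod (f k)) ^ 2).

Definition Ralpha_bounded (alpha : nat -> C) : Prop :=
  exists M : R, forall f : nat -> C, in_l2 f ->
    in_l2 (Ralpha alpha f) /\ l2norm2 (Ralpha alpha f) <= M * l2norm2 f.

Definition mu (alpha : nat -> C) (a b : nat) : R :=
  sum_n_m (fun k => (Cmod (alpha k)) ^ 2) a b.

Definition norm2_on (f : nat -> C) (a b : nat) : R :=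
  sum_n_m (fun k => (Cmod (f k)) ^ 2) a b.

Definition supported_in (f : nat -> C) (a b : nat) : Prop :=
  forall j, (j < a \/ b < j)%nat -> f j = 0%C.

Definition lfun (alpha : nat -> C) (a b : nat) (f : nat -> C) : R :=
  sum_n_m (fun k =>
    sum_n_m (fun n =>
      if Nat.eqb n k then 0
      else (Cmod (Cmult (Cmult (alpha k) (alpha n))
                        (sum_n_m f (S (Nat.min k n)) (Nat.max k n)))) ^ 2) a b) a b.

Definition lsup (alpha : nat -> C) (a b : nat) : Rbar :=
  Lub_Rbar (fun x => exists f : nat -> C,
    supported_in f a b /\ norm2_on f a b <= 1 /\ x = lfun alpha a b f).

(* L([a,b]); L = 0 when alpha vanishes on I (i.e. mu(I) = 0).
   For finite I the supremum is finite, so [real] loses nothing. *)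
Definition Lfin (alpha : nat -> C) (a b : nat) : R :=
  if Rle_dec (mu alpha a b) 0 then 0
  else sqrt (real (lsup alpha a b) / mu alpha a b).

Definition Linf (alpha : nat -> C) (a : nat) : Rbar :=
  Lub_Rbar (fun x => exists b : nat, (a <= b)%nat /\ x = Lfin alpha a b).

(* (eps,L)-sequence, with None standing for +oo:
   c_0 = 0, c_{k+1} = inf { t > c_k : L([c_k, t-1]) > eps } (inf of empty = +oo),
   and c_{k+1} = +oo once c_k = +oo. *)
Definition is_epsL_seq (alpha : nat -> C) (eps : R) (c : nat -> option nat) : Prop :=
  c 0%nat = Some 0%nat /\
  forall k : nat,
    match c k with
    | None => c (S k) = None
    | Some ck =>
        match c (S k) with
        | Some t => (ck < t)%nat /\ Lfin alpha ck (t - 1) > eps /\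
                    (forall t', (ck < t')%nat -> Lfin alpha ck (t' - 1) > eps -> (t <= t')%nat)
        | None => forall t, (ck < t)%nat -> Lfin alpha ck (t - 1) <= eps
        end
    end.

Definition seq_length (c : nat -> option nat) (N : nat) : Prop :=
  c N <> None /\ c (S N) = None.

From Stdlib Require Import Reals Arith Lra Lia Classical.
From Coquelicot Require Import Coquelicot.
Open Scope R_scope.

(* Write F k for the partial sums of f, so that |(R_alpha f)(k)|^2 = |alpha_k|^2 |F k|^2 and
   l([0,b], f) = sum_{k,n <= b} |alpha_k|^2 |alpha_n|^2 |F k - F n|^2.
   Since |F k - F n|^2 <= 2 |F k|^2 + 2 |F n|^2, we get l <= 4 mu ||R_alpha f||^2, so a bounded
   R_alpha bounds every L([0,b]).  Conversely, fix k0 with alpha_k0 <> 0.  The row n = k0 of l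
   gives |alpha_k0|^2 sum_k |alpha_k|^2 |F k - F k0|^2 <= l <= L^2 mu ||f||^2, and together with
   |F k|^2 <= 2 |F k - F k0|^2 + 2 |F k0|^2 and |F k0|^2 <= (k0+1)^2 ||f||^2 this bounds
   ||R_alpha f||^2 by a constant times ||f||^2.  Finally, the (eps,L)-sequence has length 0
   exactly when L([0,t]) <= eps for every t. *)

Lemma sum_n_m_le_loc (a b : nat -> R) n m :
  (forall k, (n <= k <= m)%nat -> a k <= b k) -> sum_n_m a n m <= sum_n_m b n m.
Proof.
  intros Hab.
  set (clip (u : nat -> R) k := if (Nat.leb n k && Nat.leb k m)%bool then u k else 0).
  assert (Hclip : forall u, sum_n_m u n m = sum_n_m (clip u) n m).
  { intros u. apply sum_n_m_ext_loc. intros k Hk. unfold clip.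
    destruct (Nat.leb_spec n k), (Nat.leb_spec k m); simpl; lia || reflexivity. }
  rewrite (Hclip a), (Hclip b). apply sum_n_m_le. intros k. unfold clip.
  destruct (Nat.leb_spec n k), (Nat.leb_spec k m); simpl; try lra. apply Hab. lia.
Qed.

Lemma sum_n_m_nonneg (a : nat -> R) n m :
  (forall k, (n <= k <= m)%nat -> 0 <= a k) -> 0 <= sum_n_m a n m.
Proof.
  intros Ha. apply Rle_trans with (sum_n_m (fun _ => 0) n m).
  - rewrite sum_n_m_const, Rmult_0_r. apply Rle_refl.
  - apply sum_n_m_le_loc, Ha.
Qed.

Lemma sum_n_m_ext_R (a b : nat -> R) n m :
  (forall k, a k = b k :> R) -> sum_n_m a n m = sum_n_m b n m :> R.
Proof. apply sum_n_m_ext. Qed.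

Lemma sum_n_m_Rplus (a b : nat -> R) n m :
  sum_n_m (fun k => a k + b k) n m = sum_n_m a n m + sum_n_m b n m :> R.
Proof. apply (sum_n_m_plus (G := R_AbelianMonoid)). Qed.

Lemma sum_n_m_Rmult_l (c : R) (a : nat -> R) n m :
  sum_n_m (fun k => c * a k) n m = c * sum_n_m a n m :> R.
Proof. apply (sum_n_m_mult_l (K := R_Ring)). Qed.

Lemma sum_n_m_Rmult_r (c : R) (a : nat -> R) n m :
  sum_n_m (fun k => a k * c) n m = sum_n_m a n m * c :> R.
Proof. apply (sum_n_m_mult_r (K := R_Ring)). Qed.

Lemma sum_n_m_Chasles_R (a : nat -> R) n m k : (n <= S m)%nat -> (m <= k)%nat ->
  sum_n_m a n k = sum_n_m a n m + sum_n_m a (S m) k :> R.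
Proof. intros. rewrite (sum_n_m_Chasles a n m k) by assumption. reflexivity. Qed.

Lemma sum_n_m_subrange_le (a : nat -> R) n m p q :
  (forall k, (n <= k <= m)%nat -> 0 <= a k) -> (n <= p)%nat -> (q <= m)%nat ->
  sum_n_m a p q <= sum_n_m a n m.
Proof.
  intros Ha Hnp Hqm.
  destruct (le_lt_dec p q) as [Hpq | Hqp].
  - assert (Htail : 0 <= sum_n_m a (S q) m) by (apply sum_n_m_nonneg; intros; apply Ha; lia).
    rewrite (sum_n_m_Chasles_R a n q m) by lia.
    destruct (Nat.eq_dec n p) as [<- | Hnp']; [lra |].
    assert (Hhead : 0 <= sum_n_m a n (pred p)) by (apply sum_n_m_nonneg; intros; apply Ha; lia).
    rewrite (sum_n_m_Chasles_R a n (pred p) q) by lia.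
    replace (S (pred p)) with p by lia. lra.
  - rewrite sum_n_m_zero by lia. apply sum_n_m_nonneg, Ha.
Qed.

Lemma sum_n_m_term_le (a : nat -> R) n m k :
  (forall j, (n <= j <= m)%nat -> 0 <= a j) -> (n <= k <= m)%nat -> a k <= sum_n_m a n m.
Proof. intros Ha Hk. rewrite <- (sum_n_n a k). apply sum_n_m_subrange_le; auto; lia. Qed.

Lemma sum_n_le_Series (a : nat -> R) n :
  (forall k, 0 <= a k) -> ex_series a -> sum_n a n <= Series a.
Proof.
  intros Ha Hex.
  apply (is_lim_seq_le_loc (fun _ => sum_n a n) (sum_n a) (sum_n a n) (Series a)).
  - exists n. intros k Hk. apply sum_n_m_subrange_le; auto; lia.
  - apply is_lim_seq_const.
  - apply Series_correct, Hex.
Qed.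

Lemma ex_series_of_bounded_sum_n (a : nat -> R) B :
  (forall k, 0 <= a k) -> (forall n, sum_n a n <= B) -> ex_series a /\ Series a <= B.
Proof.
  intros Ha HB.
  assert (Hincr : forall n, sum_n a n <= sum_n a (S n)).
  { intros n. apply sum_n_m_subrange_le; auto; lia. }
  pose proof (Lim_seq_correct _ (ex_lim_seq_incr _ Hincr)) as Hlim.
  assert (Hup : Rbar_le (Lim_seq (sum_n a)) B).
  { apply (is_lim_seq_le (sum_n a) (fun _ => B)); auto. apply is_lim_seq_const. }
  assert (Hlow : Rbar_le (sum_n a 0) (Lim_seq (sum_n a))).
  { apply (is_lim_seq_le_loc (fun _ => sum_n a 0) (sum_n a)); auto.
    - exists 0%nat. intros k _. apply sum_n_m_subrange_le; auto; lia.
    - apply is_lim_seq_const. }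
  unfold Series.
  destruct (Lim_seq (sum_n a)) as [r | |]; simpl in Hup, Hlow; try contradiction.
  split; [exists r; exact Hlim | exact Hup].
Qed.

Lemma Rbar_le_Lub_Rbar (E : R -> Prop) x : E x -> Rbar_le x (Lub_Rbar E).
Proof. intros Hx. apply (proj1 (Lub_Rbar_correct E)), Hx. Qed.

Lemma Lub_Rbar_le (E : R -> Prop) (C : R) :
  (forall x, E x -> x <= C) -> Rbar_le (Lub_Rbar E) C.
Proof. intros HC. apply (proj2 (Lub_Rbar_correct E)). exact HC. Qed.

Lemma Lub_Rbar_lt_p_infty (E : R -> Prop) :
  Rbar_lt (Lub_Rbar E) p_infty <-> exists C, forall x, E x -> x <= C.
Proof.
  split.
  - intros Hlt. destruct (Lub_Rbar E) as [r | |] eqn:HE; simpl in Hlt; try contradiction.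
    + exists r. intros x Hx. pose proof (Rbar_le_Lub_Rbar E x Hx) as H. rewrite HE in H. exact H.
    + exists 0. intros x Hx. pose proof (Rbar_le_Lub_Rbar E x Hx) as H. rewrite HE in H.
      contradiction.
  - intros [C HC]. pose proof (Lub_Rbar_le E C HC) as H.
    destruct (Lub_Rbar E); simpl in *; tauto.
Qed.

Lemma le_real_Lub_Rbar (E : R -> Prop) (C x : R) :
  (forall y, E y -> y <= C) -> E x -> x <= real (Lub_Rbar E).
Proof.
  intros HC Hx. pose proof (Rbar_le_Lub_Rbar E x Hx). pose proof (Lub_Rbar_le E C HC).
  destruct (Lub_Rbar E); simpl in *; tauto.
Qed.

(* [0 <= C] is needed for empty [E], whose supremum [m_infty] has [real m_infty = 0]. *)
Lemma real_Lub_Rbar_le (E : R -> Prop) (C : R) :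
  0 <= C -> (forall x, E x -> x <= C) -> real (Lub_Rbar E) <= C.
Proof.
  intros HC0 HC. pose proof (Lub_Rbar_le E C HC).
  destruct (Lub_Rbar E); simpl in *; tauto.
Qed.

Lemma le_sq_of_sqrt_le (x y : R) : sqrt x <= y -> x <= y ^ 2.
Proof.
  intros H. destruct (Rle_or_lt 0 x) as [Hx | Hx].
  - rewrite <- (pow2_sqrt x Hx). apply pow_incr. split; [apply sqrt_pos | exact H].
  - pose proof (pow2_ge_0 y). lra.
Qed.

Lemma le_mul_of_scaled_le (l N C : R) : 0 <= N -> 0 <= C ->
  (forall s, 0 <= s -> s * N <= 1 -> s * l <= C) -> l <= C * N.
Proof.
  intros HN HC Hs. destruct (Rle_lt_or_eq_dec 0 N HN) as [Hpos | <-].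
  - assert (Hinv : / N * l <= C).
    { apply Hs; [left; apply Rinv_0_lt_compat, Hpos | rewrite Rinv_l; lra]. }
    replace l with (/ N * l * N) by (field; lra). apply Rmult_le_compat_r; lra.
  - rewrite Rmult_0_r. apply Rnot_lt_le. intros Hl.
    assert (Hbig : (C + 1) / l * l <= C).
    { apply Hs; [apply Rdiv_le_0_compat; lra | lra]. }
    replace ((C + 1) / l * l) with (C + 1) in Hbig by (field; lra). lra.
Qed.

Lemma Cmod_plus_sq_le (x y : C) : Cmod (x + y) ^ 2 <= 2 * Cmod x ^ 2 + 2 * Cmod y ^ 2.
Proof.
  assert (Htri : Cmod (x + y) ^ 2 <= (Cmod x + Cmod y) ^ 2).
  { apply pow_incr. split; [apply Cmod_ge_0 | apply Cmod_triangle]. }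
  pose proof (pow2_ge_0 (Cmod x - Cmod y)). nra.
Qed.

Lemma norm2_on_nonneg (f : nat -> C) a b : 0 <= norm2_on f a b.
Proof. apply sum_n_m_nonneg. intros. apply pow2_ge_0. Qed.

Lemma Cmod_sum_n_m_sq_le (f : nat -> C) n m :
  Cmod (sum_n_m f n m) ^ 2 <= INR (S m - n) ^ 2 * norm2_on f n m.
Proof.
  set (N := norm2_on f n m).
  assert (HN : 0 <= N) by apply norm2_on_nonneg.
  assert (Hsum : Cmod (sum_n_m f n m) <= INR (S m - n) * sqrt N).
  { rewrite <- sum_n_m_const.
    eapply Rle_trans; [exact (norm_sum_n_m (V := C_NormedModule) f n m) |].
    apply sum_n_m_le_loc. intros j Hj. change (Cmod (f j) <= sqrt N).
    rewrite <- (sqrt_pow2 (Cmod (f j))) by apply Cmod_ge_0.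
    apply sqrt_le_1_alt, (sum_n_m_term_le (fun k => Cmod (f k) ^ 2)); [| exact Hj].
    intros. apply pow2_ge_0. }
  rewrite <- (pow2_sqrt N HN), <- Rpow_mult_distr.
  apply pow_incr. split; [apply Cmod_ge_0 | exact Hsum].
Qed.

Definition partial_sum (f : nat -> C) (k : nat) : C := sum_n_m f 0 k.

Definition truncate (f : nat -> C) (b : nat) : nat -> C :=
  fun j => if (j <=? b)%nat then f j else RtoC 0.

Lemma sum_n_m_as_partial_sums (f : nat -> C) p q : (p <= q)%nat ->
  sum_n_m f (S p) q = (partial_sum f q - partial_sum f p)%C :> C.
Proof.
  intros Hpq. unfold partial_sum. rewrite (sum_n_m_Chasles f 0 p q) by lia.
  generalize (sum_n_m f 0 p) (sum_n_m f (S p) q). intros x y. change C in x, y.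
  change (y = x + y - x)%C. ring.
Qed.

Lemma partial_sum_truncate f b k : (k <= b)%nat -> partial_sum (truncate f b) k = partial_sum f k.
Proof.
  intros Hk. apply sum_n_m_ext_loc. intros j Hj. unfold truncate.
  destruct (Nat.leb_spec j b); [reflexivity | lia].
Qed.

Lemma truncate_supported f b : supported_in (truncate f b) 0 b.
Proof. intros j Hj. unfold truncate. destruct (Nat.leb_spec j b); [lia | reflexivity]. Qed.

Lemma norm2_on_truncate f b : norm2_on (truncate f b) 0 b = norm2_on f 0 b.
Proof.
  apply sum_n_m_ext_loc. intros j Hj. unfold truncate.
  destruct (Nat.leb_spec j b); [reflexivity | lia].
Qed.

Lemma norm2_on_scal (t : R) f a b :
  norm2_on (fun j => (t * f j)%C) a b = t ^ 2 * norm2_on f a b.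
Proof.
  unfold norm2_on. rewrite <- sum_n_m_Rmult_l. apply sum_n_m_ext. intros j.
  rewrite Cmod_mult, Cmod_R, Rpow_mult_distr, pow2_abs. reflexivity.
Qed.

Lemma supported_in_l2 f b :
  supported_in f 0 b -> in_l2 f /\ l2norm2 f <= norm2_on f 0 b.
Proof.
  intros Hsupp. apply ex_series_of_bounded_sum_n; [intros; apply pow2_ge_0 |].
  intros n. destruct (le_lt_dec n b) as [Hnb | Hbn].
  - apply sum_n_m_subrange_le; [intros; apply pow2_ge_0 | lia | lia].
  - unfold sum_n. rewrite (sum_n_m_Chasles_R _ 0 b n) by lia.
    assert (Htail : sum_n_m (fun k => Cmod (f k) ^ 2) (S b) n <= sum_n_m (fun _ => 0) (S b) n).
    { apply sum_n_m_le_loc. intros k Hk. rewrite Hsupp by lia. rewrite Cmod_0. lra. }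
    rewrite sum_n_m_const, Rmult_0_r in Htail. unfold norm2_on. lra.
Qed.

Lemma l2norm2_nonneg f : in_l2 f -> 0 <= l2norm2 f.
Proof.
  intros Hf. apply Rle_trans with (sum_n (fun k => Cmod (f k) ^ 2) 0).
  - apply norm2_on_nonneg.
  - apply sum_n_le_Series; [intros; apply pow2_ge_0 | exact Hf].
Qed.

Section Ralpha_theory.

Variable alpha : nat -> C.

Lemma mu_nonneg a b : 0 <= mu alpha a b.
Proof. apply sum_n_m_nonneg. intros. apply pow2_ge_0. Qed.

Lemma Cmod_Ralpha_sq f k :
  Cmod (Ralpha alpha f k) ^ 2 = Cmod (alpha k) ^ 2 * Cmod (partial_sum f k) ^ 2.
Proof. unfold Ralpha. rewrite Cmod_mult. apply Rpow_mult_distr. Qed.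

Lemma lfun_partial_sums a b f :
  lfun alpha a b f =
  sum_n_m (fun k => sum_n_m (fun n => Cmod (alpha k) ^ 2 * Cmod (alpha n) ^ 2 *
                                      Cmod (partial_sum f k - partial_sum f n) ^ 2) a b) a b.
Proof.
  unfold lfun. apply sum_n_m_ext_R. intros k. apply sum_n_m_ext_R. intros n.
  destruct (Nat.eqb_spec n k) as [-> | Hnk]; cbv beta iota.
  - replace (partial_sum f k - partial_sum f k)%C with (RtoC 0) by ring. rewrite Cmod_0. ring.
  - rewrite !Cmod_mult, !Rpow_mult_distr.
    destruct (le_lt_dec k n).
    + rewrite Nat.min_l, Nat.max_r, sum_n_m_as_partial_sums by lia.
      replace (partial_sum f k - partial_sum f n)%C
        with (- (partial_sum f n - partial_sum f k))%C by ring.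
      rewrite Cmod_opp. reflexivity.
    + rewrite Nat.min_r, Nat.max_l, sum_n_m_as_partial_sums by lia. reflexivity.
Qed.

Lemma lfun_truncate a b f : lfun alpha a b (truncate f b) = lfun alpha a b f.
Proof.
  rewrite !lfun_partial_sums. apply sum_n_m_ext_loc. intros k Hk.
  apply sum_n_m_ext_loc. intros n Hn. rewrite !partial_sum_truncate by lia. reflexivity.
Qed.

Lemma lfun_scal a b (t : R) f :
  lfun alpha a b (fun j => (t * f j)%C) = t ^ 2 * lfun alpha a b f.
Proof.
  assert (Hsum : forall m, partial_sum (fun j => (t * f j)%C) m = (t * partial_sum f m)%C)
    by (intros; apply (sum_n_m_mult_l (K := C_Ring))).
  rewrite !lfun_partial_sums, <- sum_n_m_Rmult_l. apply sum_n_m_ext_R. intros k.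
  rewrite <- sum_n_m_Rmult_l. apply sum_n_m_ext_R. intros n.
  rewrite !Hsum.
  replace (t * partial_sum f k - t * partial_sum f n)%C
    with (t * (partial_sum f k - partial_sum f n))%C by ring.
  rewrite Cmod_mult, Cmod_R, Rpow_mult_distr, pow2_abs. ring.
Qed.

Lemma lfun_le_norm2_Ralpha a b f :
  lfun alpha a b f <= 4 * mu alpha a b * norm2_on (Ralpha alpha f) a b.
Proof.
  set (w k := Cmod (alpha k) ^ 2).
  set (g k := w k * Cmod (partial_sum f k) ^ 2).
  assert (HR : norm2_on (Ralpha alpha f) a b = sum_n_m g a b)
    by (apply sum_n_m_ext; intros; apply Cmod_Ralpha_sq).
  change (mu alpha a b) with (sum_n_m w a b). rewrite HR, lfun_partial_sums.
  apply Rle_trans with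
    (sum_n_m (fun k => sum_n_m (fun n => 2 * g k * w n + 2 * w k * g n) a b) a b).
  - apply sum_n_m_le. intros k. apply sum_n_m_le. intros n. unfold g, w.
    pose proof (Cmod_plus_sq_le (partial_sum f k) (- partial_sum f n)) as Hsq.
    rewrite Cmod_opp in Hsq.
    pose proof (pow2_ge_0 (Cmod (alpha k))). pose proof (pow2_ge_0 (Cmod (alpha n))).
    apply Rle_trans with (Cmod (alpha k) ^ 2 * Cmod (alpha n) ^ 2 *
      (2 * Cmod (partial_sum f k) ^ 2 + 2 * Cmod (partial_sum f n) ^ 2)); [| right; ring].
    apply Rmult_le_compat_l; [apply Rmult_le_pos; assumption | exact Hsq].
  - apply Req_le.
    rewrite (sum_n_m_ext_R _ (fun k => (2 * sum_n_m w a b) * g k + (2 * sum_n_m g a b) * w k)).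
    + rewrite sum_n_m_Rplus, !sum_n_m_Rmult_l. ring.
    + intros k. rewrite sum_n_m_Rplus, !sum_n_m_Rmult_l. ring.
Qed.

Lemma lfun_ge_row a b f k0 : (a <= k0 <= b)%nat ->
  Cmod (alpha k0) ^ 2 *
    sum_n_m (fun k => Cmod (alpha k) ^ 2 * Cmod (partial_sum f k - partial_sum f k0) ^ 2) a b
  <= lfun alpha a b f.
Proof.
  intros Hk0. rewrite lfun_partial_sums.
  eapply Rle_trans; [| apply (sum_n_m_term_le _ a b k0); [| exact Hk0]].
  - rewrite <- sum_n_m_Rmult_l. apply Req_le, sum_n_m_ext_R. intros n.
    replace (partial_sum f n - partial_sum f k0)%C
      with (- (partial_sum f k0 - partial_sum f n))%C by ring.
    rewrite Cmod_opp. ring.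
  - intros k _. apply sum_n_m_nonneg. intros n _.
    apply Rmult_le_pos; [apply Rmult_le_pos |]; apply pow2_ge_0.
Qed.

Lemma norm2_on_Ralpha_le_mu b f :
  norm2_on (Ralpha alpha f) 0 b <= mu alpha 0 b * (INR (S b) ^ 2 * norm2_on f 0 b).
Proof.
  unfold norm2_on at 1, mu. rewrite <- sum_n_m_Rmult_r.
  apply sum_n_m_le_loc. intros k Hk. rewrite Cmod_Ralpha_sq.
  apply Rmult_le_compat_l; [apply pow2_ge_0 |].
  eapply Rle_trans; [apply Cmod_sum_n_m_sq_le |]. rewrite Nat.sub_0_r.
  apply Rmult_le_compat; [apply pow2_ge_0 | apply norm2_on_nonneg | |].
  - apply pow_incr. split; [apply pos_INR | apply le_INR; lia].
  - apply sum_n_m_subrange_le; [intros; apply pow2_ge_0 | lia | lia].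
Qed.

Lemma lfun_le_real_lsup b f : norm2_on f 0 b <= 1 -> lfun alpha 0 b f <= real (lsup alpha 0 b).
Proof.
  intros Hf. rewrite <- lfun_truncate. unfold lsup.
  apply (le_real_Lub_Rbar _ (4 * mu alpha 0 b * (mu alpha 0 b * (INR (S b) ^ 2 * 1)))).
  - intros y [g [_ [Hg ->]]].
    pose proof (mu_nonneg 0 b). pose proof (pow2_ge_0 (INR (S b))).
    eapply Rle_trans; [apply lfun_le_norm2_Ralpha |].
    apply Rmult_le_compat_l; [lra |].
    eapply Rle_trans; [apply norm2_on_Ralpha_le_mu |].
    apply Rmult_le_compat_l; [lra |]. apply Rmult_le_compat_l; [lra | exact Hg].
  - exists (truncate f b). rewrite norm2_on_truncate.
    split; [apply truncate_supported | split; [exact Hf | reflexivity]].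
Qed.

Lemma Lfin_le_sqrt a b C : 0 <= C ->
  (forall f, supported_in f a b -> norm2_on f a b <= 1 -> lfun alpha a b f <= C * mu alpha a b) ->
  Lfin alpha a b <= sqrt C.
Proof.
  intros HC Hl. unfold Lfin.
  destruct (Rle_dec (mu alpha a b) 0) as [_ | Hmu]; [apply sqrt_pos |].
  apply Rnot_le_lt in Hmu. apply sqrt_le_1_alt, Rle_div_l; [exact Hmu |].
  unfold lsup. apply real_Lub_Rbar_le; [nra |].
  intros x [f [Hsupp [Hf ->]]]. apply Hl; assumption.
Qed.

Lemma lfun_le_Lfin b L f : Lfin alpha 0 b <= L -> 0 < mu alpha 0 b ->
  lfun alpha 0 b f <= L ^ 2 * mu alpha 0 b * norm2_on f 0 b.
Proof.
  intros HL Hmu.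
  assert (Hlsup : real (lsup alpha 0 b) <= L ^ 2 * mu alpha 0 b).
  { unfold Lfin in HL. destruct (Rle_dec (mu alpha 0 b) 0) as [| _]; [lra |].
    apply Rle_div_l; [exact Hmu |]. apply le_sq_of_sqrt_le, HL. }
  apply le_mul_of_scaled_le; [apply norm2_on_nonneg | pose proof (pow2_ge_0 L); nra |].
  intros s Hs HsN. rewrite <- (pow2_sqrt s Hs), <- lfun_scal.
  eapply Rle_trans; [apply lfun_le_real_lsup | exact Hlsup].
  rewrite norm2_on_scal, pow2_sqrt by exact Hs. exact HsN.
Qed.

Lemma norm2_on_Ralpha_le_Lfin b k0 L f :
  (k0 <= b)%nat -> alpha k0 <> 0%C -> Lfin alpha 0 b <= L ->
  norm2_on (Ralpha alpha f) 0 b <=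
  2 * mu alpha 0 b * (L ^ 2 / Cmod (alpha k0) ^ 2 + INR (S k0) ^ 2) * norm2_on f 0 b.
Proof.
  intros Hk0 Hnz HL.
  set (w k := Cmod (alpha k) ^ 2). set (F := partial_sum f).
  set (M := mu alpha 0 b). set (N := norm2_on f 0 b).
  assert (Hw0 : 0 < w k0) by (apply pow_lt, Cmod_gt_0, Hnz).
  assert (HwM : w k0 <= M).
  { apply (sum_n_m_term_le (fun k => Cmod (alpha k) ^ 2)); [intros; apply pow2_ge_0 | lia]. }
  assert (Hrow : sum_n_m (fun k => w k * Cmod (F k - F k0) ^ 2) 0 b <= L ^ 2 / w k0 * (M * N)).
  { apply Rmult_le_reg_l with (w k0); [exact Hw0 |].
    replace (w k0 * (L ^ 2 / w k0 * (M * N))) with (L ^ 2 * M * N) by (field; lra).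
    eapply Rle_trans; [apply lfun_ge_row; lia |]. apply lfun_le_Lfin; [exact HL | exact (Rlt_le_trans _ _ _ Hw0 HwM)]. }
  assert (HF0 : Cmod (F k0) ^ 2 <= INR (S k0) ^ 2 * N).
  { eapply Rle_trans; [apply Cmod_sum_n_m_sq_le |]. rewrite Nat.sub_0_r.
    apply Rmult_le_compat_l; [apply pow2_ge_0 |].
    apply sum_n_m_subrange_le; [intros; apply pow2_ge_0 | lia | lia]. }
  apply Rle_trans with
    (sum_n_m (fun k => 2 * (w k * Cmod (F k - F k0) ^ 2) + 2 * Cmod (F k0) ^ 2 * w k) 0 b).
  - apply sum_n_m_le. intros k. rewrite Cmod_Ralpha_sq. fold (w k) (F k).
    pose proof (Cmod_plus_sq_le (F k - F k0) (F k0)) as Hsq.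
    replace (F k - F k0 + F k0)%C with (F k) in Hsq by ring.
    apply Rle_trans with (w k * (2 * Cmod (F k - F k0) ^ 2 + 2 * Cmod (F k0) ^ 2));
      [apply Rmult_le_compat_l; [apply pow2_ge_0 | exact Hsq] | right; ring].
  - rewrite sum_n_m_Rplus, !sum_n_m_Rmult_l. change (sum_n_m w 0 b) with M. fold (w k0).
    assert (HM : 0 <= M) by apply mu_nonneg.
    assert (Cmod (F k0) ^ 2 * M <= INR (S k0) ^ 2 * N * M) by (apply Rmult_le_compat_r; lra).
    replace (2 * M * (L ^ 2 / w k0 + INR (S k0) ^ 2) * N)
      with (2 * (L ^ 2 / w k0 * (M * N)) + 2 * (INR (S k0) ^ 2 * N * M)) by ring.
    lra.
Qed.

Lemma Lfin_bounded_of_Ralpha_bounded :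
  Ralpha_bounded alpha -> exists L, forall b, Lfin alpha 0 b <= L.
Proof.
  intros [M HM]. exists (sqrt (4 * Rmax M 0)). intros b.
  pose proof (Rmax_l M 0). pose proof (Rmax_r M 0).
  apply Lfin_le_sqrt; [lra |]. intros f Hsupp Hf.
  destruct (supported_in_l2 f b Hsupp) as [Hl2 Hnorm].
  destruct (HM f Hl2) as [HRl2 HRM].
  pose proof (l2norm2_nonneg f Hl2).
  eapply Rle_trans; [apply lfun_le_norm2_Ralpha |].
  replace (4 * Rmax M 0 * mu alpha 0 b) with (4 * mu alpha 0 b * Rmax M 0) by ring.
  apply Rmult_le_compat_l; [pose proof (mu_nonneg 0 b); lra |].
  apply Rle_trans with (l2norm2 (Ralpha alpha f)).
  - apply sum_n_le_Series; [intros; apply pow2_ge_0 | exact HRl2].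
  - eapply Rle_trans; [exact HRM |]. nra.
Qed.

Lemma Ralpha_bounded_of_Lfin_bounded :
  in_l2 alpha -> (exists L, forall b, Lfin alpha 0 b <= L) -> Ralpha_bounded alpha.
Proof.
  intros Hal [L HL].
  destruct (classic (exists k0, alpha k0 <> 0%C)) as [[k0 Hk0] | Hzero].
  - set (c := L ^ 2 / Cmod (alpha k0) ^ 2 + INR (S k0) ^ 2).
    assert (Hc : 0 <= c).
    { apply Rplus_le_le_0_compat; [| apply pow2_ge_0].
      apply Rdiv_le_0_compat; [apply pow2_ge_0 | apply pow_lt, Cmod_gt_0, Hk0]. }
    exists (2 * l2norm2 alpha * c). intros f Hf.
    apply ex_series_of_bounded_sum_n; [intros; apply pow2_ge_0 |]. intros n.
    apply Rle_trans with (norm2_on (Ralpha alpha f) 0 (Nat.max n k0)).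
    { apply sum_n_m_subrange_le; [intros; apply pow2_ge_0 | lia | lia]. }
    eapply Rle_trans; [apply (norm2_on_Ralpha_le_Lfin _ k0); [lia | exact Hk0 | apply HL] |].
    fold c. apply Rmult_le_compat;
      [pose proof (mu_nonneg 0 (Nat.max n k0)); apply Rmult_le_pos; [lra | exact Hc]
      | apply norm2_on_nonneg | |].
    + apply Rmult_le_compat_r; [exact Hc |]. apply Rmult_le_compat_l; [lra |].
      apply sum_n_le_Series; [intros; apply pow2_ge_0 | exact Hal].
    + apply sum_n_le_Series; [intros; apply pow2_ge_0 | exact Hf].
  - exists 0. intros f _.
    apply ex_series_of_bounded_sum_n; [intros; apply pow2_ge_0 |]. intros n.
    rewrite Rmult_0_l.
    apply Rle_trans with (sum_n_m (fun _ => 0) 0 n); [| rewrite sum_n_m_const; lra].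
    apply sum_n_m_le. intros k. rewrite Cmod_Ralpha_sq.
    assert (Hk : alpha k = 0%C) by (apply NNPP; intros Hk; apply Hzero; exists k; exact Hk).
    rewrite Hk, Cmod_0. lra.
Qed.

Lemma Linf_lt_p_infty_iff :
  Rbar_lt (Linf alpha 0) p_infty <-> exists L, forall b, Lfin alpha 0 b <= L.
Proof.
  unfold Linf. rewrite Lub_Rbar_lt_p_infty. split.
  - intros [L HL]. exists L. intros b. apply HL. exists b. split; [lia | reflexivity].
  - intros [L HL]. exists L. intros x [b [_ ->]]. apply HL.
Qed.

Lemma Lfin_bounded_iff_epsL_seq_length_0 :
  (exists L, forall b, Lfin alpha 0 b <= L) <->
  exists eps : R, eps > 0 /\
    exists c : nat -> option nat, is_epsL_seq alpha eps c /\ seq_length c 0.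
Proof.
  split.
  - intros [L HL]. exists (Rmax L 0 + 1). split; [pose proof (Rmax_r L 0); lra |].
    exists (fun k => match k with 0%nat => Some 0%nat | _ => None end).
    split; [split |].
    + reflexivity.
    + intros [| k]; simpl; [| reflexivity].
      intros t _. pose proof (Rmax_l L 0). specialize (HL (t - 1)%nat). lra.
    + split; simpl; congruence.
  - intros [eps [_ [c [[Hc0 Hstep] [_ Hc1]]]]]. exists eps. intros b.
    specialize (Hstep 0%nat). rewrite Hc0, Hc1 in Hstep.
    specialize (Hstep (S b)). replace (S b - 1)%nat with b in Hstep by lia.
    apply Hstep. lia.
Qed.

End Ralpha_theory.

Theorem theorem4p4 (alpha : nat -> C) (Halpha : in_l2 alpha) :
  (Ralpha_bounded alpha <-> Rbar_lt (Linf alpha 0) p_infty) /\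
  (Rbar_lt (Linf alpha 0) p_infty <->
     exists eps : R, eps > 0 /\
       exists c : nat -> option nat, is_epsL_seq alpha eps c /\ seq_length c 0).
Proof.
  rewrite Linf_lt_p_infty_iff, <- Lfin_bounded_iff_epsL_seq_length_0.
  split; [| reflexivity]. split.
  - apply Lfin_bounded_of_Ralpha_bounded.
  - apply Ralpha_bounded_of_Lfin_bounded, Halpha.
Qed.
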